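(* Let $\mathfrak{g}$ be a finite-dimensional complex Lie algebra and let $x\cdot y=[\phi(x),y]$ be an inner CPA-structure on $\mathfrak{g}$, with $\phi$ a Lie algebra endomorphism. Let $\mathfrak{g}=\bigoplus_\alpha\mathfrak{g}_\alpha$ be the generalized eigenspace decomposition of $\mathfrak{g}$ with respect to $\phi$ (with $\mathfrak{g}_\gamma=0$ if $\gamma$ is not an eigenvalue). Then $[\mathfrak{g}_\alpha,\mathfrak{g}_\beta]\subseteq\mathfrak{g}_{\alpha\beta}$ for all $\alpha,\beta$, and $[\mathfrak{g}_\alpha,\mathfrak{g}_\beta]\neq0$ implies $\alpha+\beta=0$.
   Context: A CPA-structure on $\mathfrak{g}$ is a bilinear product $x\cdot y$ satisfying, for all $x,y,z$: $x\cdot y=y\cdot x$; $[x,y]\cdot z=x\cdot(y\cdot z)-y\cdot(x\cdot z)$; $x\cdot[y,z]=[x\cdot y,z]+[y,x\cdot z]$. It is inner if $x\cdot y=[\phi(x),y]$ with $\phi$ a Lie algebra homomorphism $\mathfrak{g}\to\mathfrak{g}$. *)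

(* Complex numbers are modelled as R[i] = complex R for
   R : realType (mathcomp-analysis reals, which form a real closed field). *)
From HB Require Import structures.
From mathcomp Require Import all_boot all_order all_algebra.
From mathcomp Require Import reals.
From mathcomp Require Export complex.
Set Implicit Arguments. Unset Strict Implicit. Unset Printing Implicit Defensive.
Import Order.TTheory GRing.Theory Num.Theory.
Local Open Scope ring_scope.

Section LieDefs.
Variables (K : fieldType) (V : lmodType K).

Definition is_lie_bracket (br : V -> V -> V) : Prop :=
  [/\ forall (a : K) (x y z : V), br (a *: x + y) z = a *: br x z + br y z,
      forall (a : K) (x y z : V), br x (a *: y + z) = a *: br x y + br x z,
      forall x : V, br x x = 0 &
      forall x y z : V, br x (br y z) + br y (br z x) + br z (br x y) = 0].

Definition is_lie_hom (br : V -> V -> V) (phi : V -> V) : Prop :=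
  (forall (a : K) (x y : V), phi (a *: x + y) = a *: phi x + phi y) /\
  (forall x y : V, phi (br x y) = br (phi x) (phi y)).

Definition is_CPA (br : V -> V -> V) (pr : V -> V -> V) : Prop :=
  [/\ forall (a : K) (x y z : V), pr (a *: x + y) z = a *: pr x z + pr y z,
      forall (a : K) (x y z : V), pr x (a *: y + z) = a *: pr x y + pr x z,
      forall x y : V, pr x y = pr y x,
      forall x y z : V, pr (br x y) z = pr x (pr y z) - pr y (pr x z) &
      forall x y z : V, pr x (br y z) = br (pr x y) z + br y (pr x z)].

Definition is_inner_CPA (br : V -> V -> V) (phi : V -> V) : Prop :=
  is_lie_hom br phi /\ is_CPA br (fun x y => br (phi x) y).

Definition gen_eigenspace (phi : V -> V) (a : K) (x : V) : Prop :=
  exists k : nat, iter k (fun v => phi v - a *: v) x = 0.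

End LieDefs.

(** The defining identities of an inner CPA-structure become, after writing
  [phi = a + (phi - a)] on [g_a] and [phi = b + (phi - b)] on [g_b], linear
  relations between [[x, y]] and brackets in which one argument has been hit
  by the nilpotent operator [phi - a] or [phi - b]. Since [phi] is a Lie
  algebra homomorphism, [(phi - ab)[x, y]] is such a combination, and since
  [[phi x, y] = [phi y, x]], [(a + b)[x, y]] is one too; an induction on the
  nilpotency indices of [x] and [y] concludes. No finite-dimensionality or
  property of the complex numbers is needed. *)
From HB Require Import structures.
From mathcomp Require Import all_boot all_order all_algebra.
From mathcomp Require Import reals complex.
Set Implicit Arguments. Unset Strict Implicit. Unset Printing Implicit Defensive.
Import GRing.Theory.
Local Open Scope ring_scope.

Section LinearMaps.
Variables (K : fieldType) (U W : lmodType K).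

Lemma linear_map0 (f : U -> W) : linear f -> f 0 = 0.
Proof. by move=> fL; have := zmod_morphism_linear fL 0 0; rewrite subrr => ->; exact: subrr. Qed.

Lemma linear_mapD (f : U -> W) : linear f -> {morph f : u v / u + v}.
Proof. by move=> fL; case: (GRing.semilinear_linear fL). Qed.

Lemma linear_mapZ (f : U -> W) : linear f -> scalable f.
Proof. exact: scalable_linear. Qed.

Lemma linear_iter (f : U -> U) (k : nat) : linear f -> linear (iter k f).
Proof. by move=> fL c u v; elim: k => [|k IHk] //=; rewrite IHk fL. Qed.

End LinearMaps.

Section GeneralizedEigenspace.
Variables (K : fieldType) (V : lmodType K) (phi : V -> V).

Definition eigen_shift (a : K) (v : V) : V := phi v - a *: v.

Lemma eigen_shift_decomp (a : K) (x : V) : phi x = eigen_shift a x + a *: x.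
Proof. by rewrite subrK. Qed.

Lemma gen_eigenspace0 (a : K) : gen_eigenspace phi a 0.
Proof. by exists 0%N. Qed.

Lemma gen_eigenspace_shift (a : K) (x : V) :
  gen_eigenspace phi a (eigen_shift a x) -> gen_eigenspace phi a x.
Proof. by case=> k hk; exists k.+1; rewrite iterSr. Qed.

Lemma gen_eigenspace_pair_ind (a b : K) (P : V -> V -> Prop) :
    (forall y, P 0 y) -> (forall x, P x 0) ->
    (forall x y, P (eigen_shift a x) y -> P x (eigen_shift b y) ->
                 P (eigen_shift a x) (eigen_shift b y) -> P x y) ->
  forall x y, gen_eigenspace phi a x -> gen_eigenspace phi b y -> P x y.
Proof.
move=> P0l P0r Pstep x y [k]; elim: k x y => [|k IHk] x y /= hx; first by rewrite hx.
case=> l; elim: l y => [|l IHl] y /= hy; first by rewrite hy.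
have hx' : iter k (eigen_shift a) (eigen_shift a x) = 0 by rewrite -iterSr.
have hy' : iter l (eigen_shift b) (eigen_shift b y) = 0 by rewrite -iterSr.
have gy : gen_eigenspace phi b y by exists l.+1.
have gNy : gen_eigenspace phi b (eigen_shift b y) by exists l.
by apply: Pstep; [exact: IHk hx' gy | exact: IHl hy' | exact: IHk hx' gNy].
Qed.

Hypothesis phi_linear : linear phi.

Lemma eigen_shift_linear (a : K) : linear (eigen_shift a).
Proof.
move=> c u v; rewrite /eigen_shift phi_linear scalerDr scalerBr !scalerA mulrC.
by rewrite addrACA opprD.
Qed.

Lemma gen_eigenspaceZ (a c : K) (u : V) :
  gen_eigenspace phi a u -> gen_eigenspace phi a (c *: u).
Proof.
case=> k hu; exists k.
by rewrite (linear_mapZ (linear_iter k (eigen_shift_linear a))) /= hu scaler0.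
Qed.

Lemma gen_eigenspaceD (a : K) (u v : V) :
  gen_eigenspace phi a u -> gen_eigenspace phi a v ->
  gen_eigenspace phi a (u + v).
Proof.
have NkL k := linear_iter k (eigen_shift_linear a).
case=> k hu [l hv]; exists (k + l)%N; rewrite (linear_mapD (NkL _)).
by rewrite !iterD hv linear_map0 // addr0 -iterD addnC iterD hu linear_map0.
Qed.

End GeneralizedEigenspace.

Section LieBracket.
Variables (K : fieldType) (V : lmodType K) (br : V -> V -> V).
Hypothesis br_lie : is_lie_bracket br.

Lemma br_linearl (z : V) : linear (br^~ z).
Proof. by case: br_lie => + _ _ _ c u v; apply. Qed.

Lemma br_linearr (x : V) : linear (br x).
Proof. by case: br_lie => _ + _ _ c u v; apply. Qed.

Lemma br0l (z : V) : br 0 z = 0.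
Proof. exact: linear_map0 (br_linearl z). Qed.

Lemma br0r (x : V) : br x 0 = 0.
Proof. exact: linear_map0 (br_linearr x). Qed.

Lemma brDl (x y z : V) : br (x + y) z = br x z + br y z.
Proof. exact: linear_mapD (br_linearl z) x y. Qed.

Lemma brDr (x y z : V) : br x (y + z) = br x y + br x z.
Proof. exact: linear_mapD (br_linearr x) y z. Qed.

Lemma brZl (c : K) (x z : V) : br (c *: x) z = c *: br x z.
Proof. exact: linear_mapZ (br_linearl z) c x. Qed.

Lemma brZr (c : K) (x z : V) : br x (c *: z) = c *: br x z.
Proof. exact: linear_mapZ (br_linearr x) c z. Qed.

Lemma br_anticomm (x y : V) : br x y = - br y x.
Proof.
case: br_lie => _ _ br_alt _; apply/eqP; rewrite -subr_eq0 opprK.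
by have := br_alt (x + y); rewrite brDl !brDr !br_alt add0r addr0 => ->.
Qed.

Lemma br_split (phi : V -> V) (a b : K) (x y : V) :
  br (phi x) (phi y) = br (eigen_shift phi a x) (eigen_shift phi b y)
    + a *: br x (eigen_shift phi b y) + b *: br (eigen_shift phi a x) y
    + (a * b) *: br x y.
Proof.
rewrite [phi x](eigen_shift_decomp phi a) [phi y](eigen_shift_decomp phi b).
move: (eigen_shift phi a x) (eigen_shift phi b y) => u v.
by rewrite brDl !brDr !brZl !brZr scalerA addrACA !addrA.
Qed.

Section Homomorphism.
Variable phi : V -> V.
Hypothesis phi_linear : linear phi.
Hypothesis phi_br : forall x y, phi (br x y) = br (phi x) (phi y).

Lemma eigen_shift_br (a b : K) (x y : V) :
  eigen_shift phi (a * b) (br x y) =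
    a *: br x (eigen_shift phi b y) + b *: br (eigen_shift phi a x) y
    + br (eigen_shift phi a x) (eigen_shift phi b y).
Proof. by rewrite {1}/eigen_shift phi_br (br_split phi a b) addrK -addrA addrC. Qed.

Lemma gen_eigenspace_br (a b : K) (x y : V) :
  gen_eigenspace phi a x -> gen_eigenspace phi b y ->
  gen_eigenspace phi (a * b) (br x y).
Proof.
move: x y; apply: gen_eigenspace_pair_ind => [y|x|x y hNx hNy hNN].
- by rewrite br0l; exact: gen_eigenspace0.
- by rewrite br0r; exact: gen_eigenspace0.
apply: gen_eigenspace_shift; rewrite eigen_shift_br.
by do !apply: gen_eigenspaceD => //; apply: gen_eigenspaceZ.
Qed.

End Homomorphism.

Section SymmetricProduct.
Variable phi : V -> V.
Hypothesis phi_sym : forall x y, br (phi x) y = br (phi y) x.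

Lemma br_eigen_shift_sum (a b : K) (x y : V) :
  br (eigen_shift phi a x) y + br x (eigen_shift phi b y) + (a + b) *: br x y = 0.
Proof.
have : br (phi x) y + br x (phi y) = 0 by rewrite phi_sym (br_anticomm x) subrr.
rewrite [phi x](eigen_shift_decomp phi a) [phi y](eigen_shift_decomp phi b).
move: (eigen_shift phi a x) (eigen_shift phi b y) => u v.
by rewrite brDl brDr brZl brZr scalerDl addrACA.
Qed.

Lemma br_gen_eigenspace_eq0 (a b : K) (x y : V) : a + b != 0 ->
  gen_eigenspace phi a x -> gen_eigenspace phi b y -> br x y = 0.
Proof.
move=> ab_neq0; move: x y; apply: gen_eigenspace_pair_ind => [y|x|x y hNx hNy _].
- exact: br0l.
- exact: br0r.
have := br_eigen_shift_sum a b x y; rewrite hNx hNy !add0r => /eqP.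
by rewrite scaler_eq0 (negPf ab_neq0) => /eqP.
Qed.

End SymmetricProduct.

End LieBracket.

Theorem lemma2p12 (R : realType) (V : vectType R[i])
    (br : V -> V -> V) (phi : V -> V) :
  is_lie_bracket br -> is_inner_CPA br phi ->
  (forall (a b : R[i]) (x y : V),
      gen_eigenspace phi a x -> gen_eigenspace phi b y ->
      gen_eigenspace phi (a * b) (br x y)) /\
  (forall a b : R[i],
      (exists x y : V, [/\ gen_eigenspace phi a x, gen_eigenspace phi b y
                          & br x y <> 0]) ->
      a + b = 0).
Proof.
move=> br_lie [[phi_linear phi_br] [_ _ phi_sym _ _]]; split.
  exact: (gen_eigenspace_br (phi := phi) br_lie phi_linear phi_br).
move=> a b [x [y [hx hy br_neq0]]]; have [//|ab_neq0] := eqVneq (a + b) 0.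
have := br_gen_eigenspace_eq0 (phi := phi) br_lie phi_sym ab_neq0 hx hy.
by move=> /br_neq0.
Qed.
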